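(* Let $X$ be a real Banach space, $A$ a non-empty subset of $X$, and $F_1,F_2$ non-empty closed bounded subsets of $X$ such that $Q_{F_1}(x)=Q_{F_2}(x)$ for each $x\in A$. If $F_1,F_2$ are USUR (respectively SUR, uniquely remotal) on $A$, then $F_1\cup F_2$ is USUR (respectively SUR, uniquely remotal) on $A$.
   Context: $B_X$ is the closed unit ball. For non-empty bounded $F$, $x\in X$, $\delta\ge0$: $r(F,x)=\sup_{y\in F}\|x-y\|$, $Q_F(x,\delta)=\{y\in F:\|x-y\|\ge r(F,x)-\delta\}$, $Q_F(x)=Q_F(x,0)$. On a set $A$, $F$ is: uniquely remotal if $Q_F(x)$ is a singleton for each $x\in A$; SUR if uniquely remotal and for every $x\in A$ and $\epsilon>0$ there is $\delta>0$ with $Q_F(x,\delta)\subseteq Q_F(x)+\epsilon B_X$; USUR if uniquely remotal and for every $\epsilon>0$ there is $\delta>0$ with $Q_F(x,\delta)\subseteq Q_F(x)+\epsilon B_X$ for all $x\in A$. *)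

From HB Require Import structures.
From mathcomp Require Import all_boot all_order all_algebra.
From mathcomp Require Import all_classical all_reals all_analysis.
Set Implicit Arguments. Unset Strict Implicit. Unset Printing Implicit Defensive.
Import Order.TTheory GRing.Theory Num.Theory.
Import numFieldNormedType.Exports.
Local Open Scope classical_set_scope.
Local Open Scope ring_scope.

Definition farthest_rad {R : realType} {X : normedModType R}
  (F : set X) (x : X) : R := sup [set `|x - y| | y in F].

Definition Qset {R : realType} {X : normedModType R}
  (F : set X) (x : X) (delta : R) : set X :=
  [set y | F y /\ farthest_rad F x - delta <= `|x - y|].

Definition Q0 {R : realType} {X : normedModType R} (F : set X) (x : X) : set X :=
  Qset F x 0.

Definition uniquely_remotal {R : realType} {X : normedModType R}
  (F A : set X) : Prop :=
  forall x, A x -> exists y : X, Q0 F x = [set y].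

(* S `<=` T + eps B_X *)
Definition in_eps_nbhd {R : realType} {X : normedModType R}
  (S T : set X) (eps : R) : Prop :=
  forall y, S y -> exists2 z, T z & `|y - z| <= eps.

Definition SUR {R : realType} {X : normedModType R} (F A : set X) : Prop :=
  uniquely_remotal F A /\
  forall x, A x -> forall eps : R, 0 < eps ->
    exists2 delta : R, 0 < delta & in_eps_nbhd (Qset F x delta) (Q0 F x) eps.

Definition USUR {R : realType} {X : normedModType R} (F A : set X) : Prop :=
  uniquely_remotal F A /\
  forall eps : R, 0 < eps ->
    exists2 delta : R, 0 < delta &
      forall x, A x -> in_eps_nbhd (Qset F x delta) (Q0 F x) eps.

(* If [y] is a farthest point of both [F1] and [F2] from [x], then [F1], [F2]
   and [F1 `|` F2] all have radius [`|x - y|] at [x], so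
   [Q_{F1 `|` F2}(x, d) = Q_{F1}(x, d) `|` Q_{F2}(x, d)] for every [d].  With
   [Q_{F1}(x) = Q_{F2}(x)] the farthest sets agree, and a [delta] that works
   for both [F1] and [F2] (their minimum) works for the union. *)
From HB Require Import structures.
From mathcomp Require Import all_boot all_order all_algebra.
From mathcomp Require Import all_classical all_reals all_analysis.
Import Order.TTheory GRing.Theory Num.Theory.
Import numFieldNormedType.Exports.
Local Open Scope classical_set_scope.
Local Open Scope ring_scope.

Set Implicit Arguments. Unset Strict Implicit.

Section FarthestPoints.
Variables (R : realType) (X : normedModType R).
Implicit Types (F S T : set X) (x y : X).

Lemma has_ubound_dist F x : [bounded y | y in F] ->
  has_ubound [set `|x - y| | y in F].
Proof.
case=> M [_ /(_ (M + 1)) bF].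
have {}bF : globally F [set y | `|y| <= M + 1] by apply: bF; rewrite ltrDl.
exists (`|x| + (M + 1)) => _ [y Fy <-].
by rewrite (le_trans (ler_normB _ _)) // lerD2l bF.
Qed.

Lemma farthest_radE F x y : F y -> (forall z, F z -> `|x - z| <= `|x - y|) ->
  farthest_rad F x = `|x - y|.
Proof.
move=> Fy far_y; apply/le_anti/andP; split.
  by apply: ge_sup => [|_ [z Fz <-]]; [exists `|x - y|, y | exact: far_y].
apply: ub_le_sup; last by exists y.
by exists `|x - y| => _ [z Fz <-]; exact: far_y.
Qed.

Lemma Q0P F x y : [bounded y | y in F] ->
  Q0 F x y <-> F y /\ forall z, F z -> `|x - z| <= `|x - y|.
Proof.
move=> bF; split => [[Fy]|[Fy far_y]].
  rewrite subr0 => rad_le; split => // z Fz.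
  apply: le_trans rad_le; apply: ub_le_sup; first exact: has_ubound_dist.
  by exists z.
by split => //; rewrite subr0 (farthest_radE Fy far_y).
Qed.

Lemma le_Qset F x d1 d2 : d1 <= d2 -> Qset F x d1 `<=` Qset F x d2.
Proof. by move=> d12 z [Fz dz]; split => //; rewrite (le_trans _ dz) ?lerB. Qed.

Lemma in_eps_nbhdS S1 S2 T e : S1 `<=` S2 ->
  in_eps_nbhd S2 T e -> in_eps_nbhd S1 T e.
Proof. by move=> S12 nbhd y /S12; exact: nbhd. Qed.

Lemma in_eps_nbhdU S1 S2 T e :
  in_eps_nbhd S1 T e -> in_eps_nbhd S2 T e -> in_eps_nbhd (S1 `|` S2) T e.
Proof. by move=> nbhd1 nbhd2 y [/nbhd1|/nbhd2]. Qed.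

Section CommonFarthestPoint.
Variables (F1 F2 : set X) (x y : X).
Hypotheses (bF1 : [bounded y | y in F1]) (bF2 : [bounded y | y in F2]).
Hypotheses (Q1y : Q0 F1 x y) (Q2y : Q0 F2 x y).

Lemma Qset_setU d : Qset (F1 `|` F2) x d = Qset F1 x d `|` Qset F2 x d.
Proof.
have [F1y far1] := (Q0P x y bF1).1 Q1y.
have [F2y far2] := (Q0P x y bF2).1 Q2y.
have rad12 : farthest_rad (F1 `|` F2) x = `|x - y|.
  by apply: farthest_radE => [|z [/far1|/far2]] //; left.
rewrite /Qset rad12 (farthest_radE F1y far1) (farthest_radE F2y far2).
apply/seteqP; split => z /=; first by case=> -[Fz|Fz] dz; [left|right].
by case=> -[Fz dz]; split => //; [left|right].
Qed.

Lemma Q0_setU : Q0 (F1 `|` F2) x = Q0 F1 x `|` Q0 F2 x.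
Proof. exact: Qset_setU. Qed.

End CommonFarthestPoint.

Section UnionRemotal.
Variables (F1 F2 A : set X).
Hypotheses (bF1 : [bounded y | y in F1]) (bF2 : [bounded y | y in F2]).
Hypothesis Q12 : forall x, A x -> Q0 F1 x = Q0 F2 x.

Lemma Q0_setU_eq x y : A x -> Q0 F1 x y -> Q0 (F1 `|` F2) x = Q0 F1 x.
Proof.
move=> Ax Q1y; have Q2y : Q0 F2 x y by rewrite -Q12.
by rewrite (Q0_setU bF1 bF2 Q1y Q2y) -Q12 // setUid.
Qed.

Lemma in_eps_nbhd_Qset_setU x y d1 d2 e : A x -> Q0 F1 x y ->
  in_eps_nbhd (Qset F1 x d1) (Q0 F1 x) e ->
  in_eps_nbhd (Qset F2 x d2) (Q0 F2 x) e ->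
  in_eps_nbhd (Qset (F1 `|` F2) x (Num.min d1 d2)) (Q0 (F1 `|` F2) x) e.
Proof.
move=> Ax Q1y nbhd1 nbhd2; have Q2y : Q0 F2 x y by rewrite -Q12.
rewrite (Qset_setU bF1 bF2 Q1y Q2y) (Q0_setU_eq Ax Q1y).
apply: in_eps_nbhdU.
  by apply: in_eps_nbhdS nbhd1; apply: le_Qset; rewrite ge_min lexx.
rewrite Q12 //; apply: in_eps_nbhdS nbhd2.
by apply: le_Qset; rewrite ge_min lexx orbT.
Qed.

Lemma uniquely_remotal_setU :
  uniquely_remotal F1 A -> uniquely_remotal (F1 `|` F2) A.
Proof.
move=> ur1 x Ax; have [y Q1x] := ur1 x Ax.
by exists y; rewrite (@Q0_setU_eq x y) // Q1x.
Qed.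

Lemma SUR_setU : SUR F1 A -> SUR F2 A -> SUR (F1 `|` F2) A.
Proof.
move=> [ur1 sur1] [_ sur2]; split; first exact: uniquely_remotal_setU.
move=> x Ax e e0; have [y Q1x] := ur1 x Ax.
have [d1 d1_gt0 nbhd1] := sur1 x Ax e e0.
have [d2 d2_gt0 nbhd2] := sur2 x Ax e e0.
exists (Num.min d1 d2); first by rewrite lt_min d1_gt0.
by apply: in_eps_nbhd_Qset_setU nbhd1 nbhd2; rewrite // Q1x.
Qed.

Lemma USUR_setU : USUR F1 A -> USUR F2 A -> USUR (F1 `|` F2) A.
Proof.
move=> [ur1 usur1] [_ usur2]; split; first exact: uniquely_remotal_setU.
move=> e e0; have [d1 d1_gt0 nbhd1] := usur1 e e0.
have [d2 d2_gt0 nbhd2] := usur2 e e0.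
exists (Num.min d1 d2) => [|x Ax]; first by rewrite lt_min d1_gt0.
have [y Q1x] := ur1 x Ax.
by apply: in_eps_nbhd_Qset_setU (nbhd1 x Ax) (nbhd2 x Ax); rewrite // Q1x.
Qed.

End UnionRemotal.

End FarthestPoints.

Theorem corollary2p11 (R : realType) (X : completeNormedModType R)
  (A F1 F2 : set X) :
  A !=set0 ->
  F1 !=set0 -> closed F1 -> [bounded y | y in F1] ->
  F2 !=set0 -> closed F2 -> [bounded y | y in F2] ->
  (forall x, A x -> Q0 F1 x = Q0 F2 x) ->
  [/\ (USUR F1 A -> USUR F2 A -> USUR (F1 `|` F2) A),
      (SUR F1 A -> SUR F2 A -> SUR (F1 `|` F2) A) &
      (uniquely_remotal F1 A -> uniquely_remotal F2 A ->
         uniquely_remotal (F1 `|` F2) A)].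
Proof.
move=> _ _ _ bF1 _ _ bF2 Q12; split.
- exact: USUR_setU.
- exact: SUR_setU.
- by move=> ur1 _; exact: uniquely_remotal_setU.
Qed.
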